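(* Let $D$ be a spatial graph diagram and consider any Wirtinger coloring process on its truncated diagram, i.e. a sequence of stages $(A_0,f_0)\to(A_1,f_1)\to\cdots$ where $A_0$ is the set of seed strands and each subsequent stage is obtained by one coloring move. Then at every stage, for each color $c$, the set of strands colored $c$ is either (1) a single connected arc, if the seed of color $c$ is a single strand, or (2) a union of $n$ disjoint arcs, if the seed of color $c$ is the set of strands at a deleted vertex of degree $n$.
   Context: A spatial graph diagram $D$ is a generic planar projection of a spatial graph with crossing information. Its truncated diagram is obtained by deleting all vertices of degree $>2$, leaving free ends. A strand is an arc connecting an undercrossing to a free end, or connecting two undercrossings. A coloring process starts with $k$ seeds, each colored with its own color: a seed is either a single strand or the set of all strands incident to one deleted vertex (a ''pod'', all such strands getting the same color). At stage $i$, $A_i$ is the set of colored strands and $f_i\colon A_i\to\{\text{colors}\}$ the coloring. A coloring move: at a crossing whose overstrand is colored and one of whose two understrands is colored, color the other understrand with the color of that colored understrand; thus $A_{i+1}=A_i\cup\{s\}$ for one new strand $s$. *)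

(* Combinatorial model of the truncated diagram of a
   spatial graph diagram, at the level of strands. *)
From mathcomp Require Import all_boot.
Set Implicit Arguments. Unset Strict Implicit. Unset Printing Implicit Defensive.

(* V = deleted vertices (degree > 2), X = crossings, S = strands.
   Each strand has two ends (indexed by bool).  An end lies either
     - at a free end created by deleting a vertex v        : inl (inl v)
     - at an undercrossing x (strand passes under at x)     : inl (inr x)
     - at a (non-deleted) vertex of degree one               : inr tt   *)
Notation endpoint V X := ((V + X) + unit)%type.
Notation FreeEnd v := (inl (inl v)).
Notation UnderEnd x := (inl (inr x)).

Record tdiagram (V X S : finType) := TDiagram {
  over : X -> S;
  endp : S -> bool -> endpoint V X;
  under_two : forall x : X,
      #|[pred e : S * bool | endp e.1 e.2 == UnderEnd x]| = 2;
  (* every deleted vertex has degree > 2 (= number of free ends there) *)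
  deleted_deg : forall v : V,
      2 < #|[pred e : S * bool | endp e.1 e.2 == FreeEnd v]|
}.

Section Defs.
Variables (V X S : finType) (D : tdiagram V X S).

Definition deg (v : V) : nat :=
  #|[pred e : S * bool | endp D e.1 e.2 == FreeEnd v]|.

Definition joined (s t : S) : bool :=
  [exists x : X, exists b : bool, exists b' : bool,
     [&& endp D s b == UnderEnd x, endp D t b' == UnderEnd x
       & (s, b) != (t, b')]].

(* a connected arc: nonempty duplicate-free chain of strands, consecutive
   ones meeting at an undercrossing *)
Definition is_arc (p : seq S) : bool :=
  if p is s :: p' then uniq p && path joined s p' else false.

Inductive seed := SeedStrand of S | SeedPod of V.

Definition seed_set (sd : seed) : {set S} :=
  match sd with
  | SeedStrand s => [set s]
  | SeedPod v => [set s | [exists b : bool, endp D s b == FreeEnd v]]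
  end.

(* one coloring move from coloring f to coloring f' (None = uncolored) *)
Definition coloring_move (k : nat) (f f' : S -> option 'I_k) : Prop :=
  exists (x : X) (s t : S) (b b' : bool) (c : 'I_k),
    [/\ endp D s b = UnderEnd x, endp D t b' = UnderEnd x & (s, b) <> (t, b')] /\
    [/\ f (over D x) <> None, f t = Some c, f s = None
      & forall y, f' y = if y == s then Some c else f y].

End Defs.
Arguments SeedStrand {V S}.
Arguments SeedPod {V S}.

(** A coloring move adds to a color class a strand [s] that meets, at an
    undercrossing, a strand [t] already in the class.  If [t] were an interior
    strand of one of the arcs forming the class, both of its ends would already
    be shared with its two neighbours on that arc; since a crossing has only two
    under-ends, [s] would have to be one of those neighbours, hence already
    colored.  So [t] ends its arc, and [s] can be appended to that arc: every
    color class stays a single arc (strand seed) or [n] disjoint arcs (pod seed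
    of a degree-[n] vertex), the number of arcs never changing. *)
From mathcomp Require Import all_boot.

Set Implicit Arguments.
Unset Strict Implicit.
Unset Printing Implicit Defensive.

Lemma pairwise_cat_cons_eq (T : eqType) (r : rel T) (xs ys : seq T) (x y : T) :
  {in xs, forall z, r z y = r z x} -> {in ys, forall z, r y z = r x z} ->
  pairwise r (xs ++ y :: ys) = pairwise r (xs ++ x :: ys).
Proof.
move=> Exs Eys.
by rewrite !pairwise_cat !pairwise_cons !allrel_consr (eq_in_all Exs) (eq_in_all Eys).
Qed.

Section Arcs.
Variables (V X S : finType) (D : tdiagram V X S).

Lemma under_end_cases x u1 e1 u2 e2 u e :
  endp D u1 e1 = UnderEnd x -> endp D u2 e2 = UnderEnd x -> (u1, e1) <> (u2, e2) ->
  endp D u e = UnderEnd x -> (u, e) = (u1, e1) \/ (u, e) = (u2, e2).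
Proof.
move=> H1 H2 N12 H.
case: (eqVneq (u, e) (u1, e1)) => [->|N1]; first by left.
case: (eqVneq (u, e) (u2, e2)) => [->|N2]; first by right.
have := under_two D x.
rewrite (cardD1 (u1, e1)) (cardD1 (u2, e2)) (cardD1 (u, e)) !inE /= H1 H2 H !eqxx /=.
have -> : (u2, e2) != (u1, e1) by apply/eqP => E; apply: N12; rewrite E.
by rewrite N1 N2.
Qed.

Lemma joinedP s t :
  reflect (exists x b b', [/\ endp D s b = UnderEnd x, endp D t b' = UnderEnd x
                             & (s, b) <> (t, b')])
          (joined D s t).
Proof.
apply: (iffP existsP) => [[x /existsP[b /existsP[b' /and3P[/eqP hs /eqP ht /eqP ne]]]]|].
  by exists x, b, b'.
move=> [x [b [b' [hs ht ne]]]]; exists x.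
by apply/existsP; exists b; apply/existsP; exists b'; rewrite hs ht !eqxx; apply/eqP.
Qed.

Lemma joined_sym s t : joined D s t = joined D t s.
Proof.
by apply/joinedP/joinedP => -[x [b [b' [hs ht ne]]]];
  exists x, b', b; split=> // E; apply: ne; case: E => -> ->.
Qed.

Lemma joined_neighbours a t n s :
  joined D a t -> joined D t n -> n != a -> n != t -> joined D s t ->
  s = a \/ s = n.
Proof.
move=> /joinedP[x1 [e1 [e2 [ha ht1 ne1]]]] /joinedP[x2 [e3 [e4 [ht2 hn ne2]]]] na nt.
move=> /joinedP[x [b [b' [hs ht ne]]]].
case: (eqVneq b' e2) => [E2|D2].
  subst e2; rewrite ht in ht1; case: ht1 => E; subst x1.
  by case: (under_end_cases ha ht ne1 hs) => [[-> _]|/ne]; [left|].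
case: (eqVneq b' e3) => [E3|D3].
  subst e3; rewrite ht in ht2; case: ht2 => E; subst x2.
  by case: (under_end_cases ht hn ne2 hs) => [/ne|[-> _]]; [|right].
have E23 : e2 = e3 by move: D2 D3; case: (b'); case: (e2); case: (e3).
subst e3; rewrite ht1 in ht2; case: ht2 => E; subst x2.
by case: (under_end_cases ha ht1 ne1 hn) => -[E _]; rewrite E eqxx in na nt.
Qed.

Lemma is_arcE p : is_arc D p = (p != [::]) && uniq p && sorted (joined D) p.
Proof. by case: p. Qed.

Lemma is_arc_rev p : is_arc D (rev p) = is_arc D p.
Proof.
rewrite !is_arcE rev_uniq rev_sorted -!size_eq0 size_rev.
by rewrite (@eq_sorted _ (fun z => (joined D)^~ z) (joined D) (fun a b => joined_sym b a)).
Qed.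

Lemma is_arc_cons s t p :
  is_arc D (t :: p) -> s \notin t :: p -> joined D s t -> is_arc D [:: s, t & p].
Proof. by rewrite /= => /andP[-> ->] -> ->. Qed.

Lemma is_arc_inner_joined p1 a t n p2 s :
  is_arc D (rcons p1 a ++ [:: t, n & p2]) -> joined D s t -> s = a \/ s = n.
Proof.
rewrite is_arcE cat_rcons sorted_cat_cons /= cat_uniq /= !inE !negb_or.
move=> /andP[/andP[_ /and5P[_ _ /and3P[_ an _] /andP[tn _] _]] /andP[_ /and3P[Jat Jtn _]]].
by apply: joined_neighbours; rewrite // eq_sym.
Qed.

Lemma is_arc_extend p s t :
  is_arc D p -> t \in p -> s \notin p -> joined D s t ->
  exists2 p', is_arc D p' & p' =i s :: p.
Proof.
move=> Ap tp sp Jst; move: Ap sp; case/splitPr: tp => p1 p2.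
case/lastP: p1 => [|q a] Ap sp.
  by exists [:: s, t & p2] => //; apply: is_arc_cons.
case: p2 Ap sp => [|n r] Ap sp.
  exists (s :: rev (rcons q a ++ [:: t])); last by move=> y; rewrite !inE mem_rev.
  rewrite cats1 rev_rcons; apply: is_arc_cons => //.
    by rewrite -rev_rcons is_arc_rev -cats1.
  by rewrite -rev_rcons mem_rev -cats1.
move: sp; rewrite !mem_cat mem_rcons !inE.
by case: (is_arc_inner_joined Ap Jst) => ->; rewrite eqxx ?orbT.
Qed.

Definition single_arc (A : {set S}) : Prop :=
  exists p : seq S, is_arc D p /\ A = [set s in p].

Definition disjoint_arcs (n : nat) (A : {set S}) : Prop :=
  exists ps : seq (seq S),
    [/\ size ps = n,
        all (is_arc D) ps,
        pairwise (fun p q : seq S => [disjoint p & q]) ps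
      & A = [set s | has (fun p => s \in p) ps]].

Lemma single_arc1 s : single_arc [set s].
Proof. by exists [:: s]; split=> //; apply/setP => y; rewrite !inE. Qed.

Lemma disjoint_arcs_card (A : {set S}) : disjoint_arcs #|A| A.
Proof.
exists [seq [:: y] | y <- enum A]; split.
- by rewrite size_map cardE.
- by apply/allP => p /mapP[y _ ->].
- rewrite pairwise_map; apply: (@sub_pairwise _ [rel x y | x != y]).
    by move=> a b /= ab; rewrite disjoint_cons inE ab; apply/pred0P.
  by rewrite -uniq_pairwise enum_uniq.
- apply/setP => y; rewrite inE has_map.
  rewrite (@eq_has _ _ (pred1 y)); last by move=> z; rewrite /= inE eq_sym.
  by rewrite has_pred1 mem_enum.
Qed.

Lemma single_arc_grow A s t :
  single_arc A -> t \in A -> s \notin A -> joined D s t -> single_arc (s |: A).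
Proof.
move=> [p [Ap ->]]; rewrite !inE => tp sp Jst.
have [p' Ap' Ep'] := is_arc_extend Ap tp sp Jst.
by exists p'; split=> //; apply/setP => y; rewrite !inE Ep' inE.
Qed.

Lemma disjoint_arcs_grow n A s t :
  disjoint_arcs n A -> t \in A -> s \notin A -> joined D s t ->
  disjoint_arcs n (s |: A).
Proof.
move=> [ps [Sz Aps Pps ->]]; rewrite !inE => /hasP[p pps tp] /hasPn sps Jst.
have [p' Ap' Ep'] := is_arc_extend (allP Aps p pps) tp (sps p pps) Jst.
have Dl (q : seq S) : s \notin q -> [disjoint p' & q] = [disjoint p & q].
  by move=> sq; rewrite (eq_disjoint Ep') disjoint_cons sq.
move: pps Sz Aps Pps sps; case/splitPr => ps1 ps2 Sz Aps Pps sps.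
have sq (q : seq S) : q \in ps1 ++ ps2 -> s \notin q.
  by move=> qin; apply: sps; move: qin; rewrite !mem_cat inE => /orP[] ->; rewrite ?orbT.
exists (ps1 ++ p' :: ps2); split.
- by rewrite -Sz !size_cat.
- by move: Aps; rewrite !all_cat /= Ap' => /and3P[-> _ ->].
- rewrite (pairwise_cat_cons_eq (x := p)) // => q qin.
    by rewrite disjoint_sym Dl 1?disjoint_sym // sq // mem_cat qin.
  by rewrite Dl // sq // mem_cat qin orbT.
- apply/setP => y; rewrite !inE !has_cat /= Ep' inE.
  by case: (y == s); rewrite ?orbT.
Qed.

Definition seed_shape (sd : seed V S) (A : {set S}) : Prop :=
  match sd with
  | SeedStrand _ => single_arc A
  | SeedPod v => disjoint_arcs (deg D v) A
  end.

Lemma seed_shape_seed sd :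
  (forall v, sd = SeedPod v -> #|seed_set D (SeedPod v)| = deg D v) ->
  seed_shape sd (seed_set D sd).
Proof.
case: sd => [s|v] Hpod /=; first exact: single_arc1.
by rewrite -(Hpod v) //; apply: disjoint_arcs_card.
Qed.

Lemma seed_shape_grow sd A s t :
  seed_shape sd A -> t \in A -> s \notin A -> joined D s t -> seed_shape sd (s |: A).
Proof. by case: sd => [_|v] /=; [apply: single_arc_grow | apply: disjoint_arcs_grow]. Qed.

Definition color_class k (f : S -> option 'I_k) (c : 'I_k) : {set S} :=
  [set s | f s == Some c].

Lemma coloring_move_class k (f f' : S -> option 'I_k) c :
  coloring_move D f f' ->
  color_class f' c = color_class f c \/
  exists s t, [/\ joined D s t, t \in color_class f c, s \notin color_class f c
                & color_class f' c = s |: color_class f c].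
Proof.
move=> [x [s [t [b [b' [c0 [[hs ht ne] [_ ft fs f'E]]]]]]]].
case: (eqVneq c0 c) => [<-|nc].
  right; exists s, t; split; rewrite ?inE ?ft ?fs //.
    by apply/joinedP; exists x, b, b'.
  by apply/setP => y; rewrite !inE f'E; case: (y =P s) => [->|]; rewrite ?eqxx.
left; apply/setP => y; rewrite !inE f'E; case: (y =P s) => [->|//].
by rewrite fs; apply/eqP => -[/eqP]; rewrite (negPf nc).
Qed.

End Arcs.

Theorem lemma3p1 (V X S : finType) (D : tdiagram V X S)
  (k : nat) (seeds : 'I_k -> seed V S)
  (* the pod of a degree-n vertex consists of n (distinct) strands *)
  (Hpod : forall (c : 'I_k) (v : V), seeds c = SeedPod v ->
            #|seed_set D (SeedPod v)| = deg D v)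
  (N : nat) (f : nat -> S -> option 'I_k)
  (* stage 0: exactly the seed strands are colored, each with its seed's color *)
  (H0 : forall (s : S) (c : 'I_k), f 0 s = Some c <-> s \in seed_set D (seeds c))
  (Hstep : forall i, i < N -> coloring_move D (f i) (f i.+1)) :
  forall i, i <= N -> forall c : 'I_k,
    (forall s0, seeds c = SeedStrand s0 ->
       exists p : seq S, is_arc D p /\ [set s | f i s == Some c] = [set s in p])
    /\
    (forall v, seeds c = SeedPod v ->
       exists ps : seq (seq S),
         [/\ size ps = deg D v,
             all (is_arc D) ps,
             pairwise (fun p q : seq S => [disjoint p & q]) ps
           & [set s | f i s == Some c] = [set s | has (fun p => s \in p) ps]]).
Proof.
have shape i : i <= N -> forall c, seed_shape D (seeds c) (color_class (f i) c).
  elim: i => [|i IH] Hi c.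
    have -> : color_class (f 0) c = seed_set D (seeds c).
      by apply/setP => s; rewrite inE; apply/eqP/idP => /H0.
    exact/seed_shape_seed/Hpod.
  have shape_i := IH (ltnW Hi) c.
  have [->|[s [t [Jst tA sA ->]]]] := coloring_move_class c (Hstep i Hi) => //.
  exact: seed_shape_grow shape_i tA sA Jst.
move=> i Hi c.
by split=> [s0|v] E; move: (shape i Hi c); rewrite E.
Qed.
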